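(* Let $\mathcal{D}=\{(x_i,a_i,y_i)\}_{i=1}^N$ be a dataset with $a_i\in\{1,2\}$, $y_i\in\{0,1\}$, and let $\mathcal{R}$ be a group-aware Bayes-optimal score (GABOS) function with respect to $\mathcal{D}$. Let the loss $\mathcal{L}$ be the misclassification error on $\mathcal{D}$ of the (normalized) thresholding of $\mathcal{R}$, and let the bias $\mathcal{B}$ be the demographic-parity bias or the equal-opportunity bias on $\mathcal{D}$. Then the post-processing method applied to $\mathcal{R}$ is slack-consistent: for every individual $(x,a)$, the prediction $f_\beta(x,a)$ of the returned classifier is monotonic in the slack $\beta>0$.
   Context: GABOS function: $\mathcal{R}$ is group-aware Bayes-optimal with respect to $\mathcal{D}$ if for every $(x,a)$ appearing in $\mathcal{D}$, $\mathcal{R}(x,a)$ equals the empirical probability that $(x,a)$ is labeled positively in $\mathcal{D}$, i.e. $\mathcal{R}(x,a)=|\{i: x_i=x,a_i=a,y_i=1\}|/|\{i:x_i=x,a_i=a\}|$. A (stochastic) classifier $f$ gives probability $f(x,a)\in[0,1]$ of a positive prediction. Demographic-parity bias: $\mathcal{B}(f)=\frac{\sum_i f(x_i,a_i)\mathbb{1}[a_i=1]}{\sum_i\mathbb{1}[a_i=1]}-\frac{\sum_i f(x_i,a_i)\mathbb{1}[a_i=2]}{\sum_i\mathbb{1}[a_i=2]}$. Equal-opportunity bias: the same with the additional restriction $y_i=1$ in every indicator. Normalized thresholds: for group $a$, a normalized threshold $\tau\in[0,1]$ denotes a threshold classifier on $\mathcal{R}(x,a)$ in group $a$, randomized over at most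 two adjacent deterministic thresholds, whose positive prediction rate in group $a$ (on $\mathcal{D}$) equals $1-\tau$. A pair $(\tau_1,\tau_2)$ defines a classifier (group $a$ uses $\tau_a$) with loss $\mathcal{L}(\tau_1,\tau_2)$ and bias $\mathcal{B}(\tau_1,\tau_2)$. Post-processing method with slack $\beta>0$: among all $(\tau_1,\tau_2)\in[0,1]^2$ minimizing $\mathcal{L}(\tau_1,\tau_2)$ subject to $|\mathcal{B}(\tau_1,\tau_2)|\le\beta$, keep those with smallest $|\mathcal{B}|$; among those the ones with smallest $\tau_1$; among those return the one with smallest $\tau_2$. The resulting classifier is $f_\beta$. Slack-consistency: for every individual $(x,a)$ and all $\beta_1<\beta_2<\beta_3$, either $f_{\beta_1}(x,a)\le f_{\beta_2}(x,a)\le f_{\beta_3}(x,a)$ or $f_{\beta_1}(x,a)\ge f_{\beta_2}(x,a)\ge f_{\beta_3}(x,a)$. *)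

From HB Require Import structures.
From mathcomp Require Import all_boot all_order all_algebra.
From mathcomp Require Import reals.
Set Implicit Arguments. Unset Strict Implicit. Unset Printing Implicit Defensive.
Import Order.TTheory GRing.Theory Num.Theory.
Local Open Scope ring_scope.

(* A data point (x_i, a_i, y_i) is a triple ((x, a), y) with a : nat in {1,2}
   and y : bool (true = label 1). *)
Section Fair.
Variables (R : realType) (X : eqType).
Notation pt := (X * nat * bool)%type.

Definition xi (d : pt) : X := d.1.1.
Definition ai (d : pt) : nat := d.1.2.
Definition yi (d : pt) : bool := d.2.

Definition GABOS (S : X -> nat -> R) (D : seq pt) : Prop :=
  forall d, d \in D ->
    S (xi d) (ai d) =
      (count (fun e => [&& xi e == xi d, ai e == ai d & yi e]) D)%:R /
      (count (fun e => (xi e == xi d) && (ai e == ai d)) D)%:R.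

Definition grp_mass (S : X -> nat -> R) (D : seq pt) (a : nat) (P : R -> bool) : R :=
  (count (fun e => (ai e == a) && P (S (xi e) (ai e))) D)%:R /
  (count (fun e => ai e == a) D)%:R.

(* Normalized threshold tau in group a: threshold classifier on the score in
   group a, randomized over (at most) two adjacent deterministic thresholds,
   with positive prediction rate 1 - tau in group a: points with score strictly
   above the cut level get 1, below get 0, at the cut level get the probability
   making the rate exactly 1 - tau. *)
Definition thr (S : X -> nat -> R) (D : seq pt) (a : nat) (tau : R) (x : X) : R :=
  let r := S x a in
  let G := grp_mass S D a (fun s => r < s) in
  let E := grp_mass S D a (fun s => s == r) in
  Num.min 1 (Num.max 0 ((1 - tau - G) / E)).

Definition clf (S : X -> nat -> R) (D : seq pt) (t : R * R) (x : X) (a : nat) : R :=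
  if a == 1%N then thr S D 1 t.1 x else thr S D 2 t.2 x.

Definition loss (S : X -> nat -> R) (D : seq pt) (t : R * R) : R :=
  (\sum_(d <- D) (if yi d then 1 - clf S D t (xi d) (ai d)
                           else clf S D t (xi d) (ai d))) / (size D)%:R.

Inductive bias_kind := DemParity | EqOpportunity.

Definition in_pop (k : bias_kind) (a : nat) (d : pt) : bool :=
  match k with
  | DemParity => ai d == a
  | EqOpportunity => (ai d == a) && yi d
  end.

Definition pop_mean (S : X -> nat -> R) (D : seq pt) (k : bias_kind) (a : nat)
    (t : R * R) : R :=
  (\sum_(d <- D | in_pop k a d) clf S D t (xi d) (ai d)) / (count (in_pop k a) D)%:R.

Definition bias (S : X -> nat -> R) (D : seq pt) (k : bias_kind) (t : R * R) : R :=
  pop_mean S D k 1 t - pop_mean S D k 2 t.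

Definition feasible S D k (beta : R) (t : R * R) : Prop :=
  [/\ 0 <= t.1 <= 1, 0 <= t.2 <= 1 & `|bias S D k t| <= beta].
Definition sel1 S D k beta (t : R * R) : Prop :=
  feasible S D k beta t /\ forall t', feasible S D k beta t' -> loss S D t <= loss S D t'.
Definition sel2 S D k beta (t : R * R) : Prop :=
  sel1 S D k beta t /\ forall t', sel1 S D k beta t' -> `|bias S D k t| <= `|bias S D k t'|.
Definition sel3 S D k beta (t : R * R) : Prop :=
  sel2 S D k beta t /\ forall t', sel2 S D k beta t' -> t.1 <= t'.1.
Definition returned S D k beta (t : R * R) : Prop :=
  sel3 S D k beta t /\ forall t', sel3 S D k beta t' -> t.2 <= t'.2.

End Fair.

From HB Require Import structures.
From mathcomp Require Import all_boot all_order all_algebra.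
From mathcomp Require Import reals.
From mathcomp Require Import all_classical all_reals all_analysis.
From mathcomp Require Import ring lra.
Import Order.TTheory GRing.Theory Num.Theory.
Import numFieldNormedType.Exports.
Local Open Scope ring_scope.

Set Implicit Arguments.
Unset Strict Implicit.
Unset Printing Implicit Defensive.

(* Loss and bias are separable: loss (t1, t2) = l1 t1 + l2 t2 and
   bias (t1, t2) = g1 t1 - g2 t2, where g_a is the non-increasing, continuous positive
   rate of group a.  Bayes optimality lets every label be replaced by its score, so l_a and
   g_a are sums of the same per-point threshold functions; since a threshold accepts a
   higher score before a lower one, the points (g_a t, l_a t) lie on a convex curve.
   Mixing along these curves shows that, as the slack grows, the bias of the returned pair
   never changes sign and never decreases in absolute value, and an exchange argument turns
   an ordering of biases into opposite orderings of t1 and t2.  Hence both thresholds, and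
   with them every prediction, move monotonically.  Existence follows from compactness of
   [0, 1]^2 and continuity of loss and bias. *)

Lemma monotone_of_norm_chain (R : realDomainType) (x y z : R) :
  `|x| <= `|y| -> `|y| <= `|z| -> 0 <= x * y -> 0 <= y * z ->
  (x <= y <= z) \/ (z <= y <= x).
Proof.
case: (lerP 0 x) => hx; case: (lerP 0 y) => hy; case: (lerP 0 z) => hz;
  rewrite ?(ger0_norm hx) ?(ltr0_norm hx) ?(ger0_norm hy) ?(ltr0_norm hy)
          ?(ger0_norm hz) ?(ltr0_norm hz) => xy yz pxy pyz;
  first [by left; apply/andP; split; nra | by right; apply/andP; split; nra].
Qed.

Section Clamp.
Variable R : realDomainType.

Definition clamp01 (v : R) : R := Num.min 1 (Num.max 0 v).

Lemma clamp01_ge0 v : 0 <= clamp01 v.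
Proof. by rewrite /clamp01 le_min ler01 le_max lexx. Qed.

Lemma clamp01_le1 v : clamp01 v <= 1.
Proof. by rewrite /clamp01 ge_min lexx. Qed.

Lemma clamp01_le u v : u <= v -> clamp01 u <= clamp01 v.
Proof. by move=> uv; apply: le_min2 => //; apply: le_max2. Qed.

Lemma clamp01_le0 v : v <= 0 -> clamp01 v = 0.
Proof. by move=> v0; apply/le_anti; rewrite clamp01_ge0 ge_min ge_max lexx v0 orbT. Qed.

Lemma clamp01_ge1 v : 1 <= v -> clamp01 v = 1.
Proof. by move=> v1; apply/le_anti; rewrite clamp01_le1 le_min lexx le_max v1 orbT. Qed.

End Clamp.

Lemma clamp01_continuous (R : realType) : continuous (@clamp01 R).
Proof.
apply: min_fun_continuous; first exact: cst_continuous.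
apply: max_fun_continuous; first exact: cst_continuous.
by move=> v; exact: cvg_id.
Qed.

Lemma compact_argmin (T : topologicalType) (R : realType)
    (P : T -> Prop) (A : set T) (f : T -> R) :
  compact A -> (A !=set0)%classic -> continuous f -> (forall t, A t <-> P t) ->
  exists2 A' : set T, compact A' /\ (A' !=set0)%classic &
    forall t, A' t <-> P t /\ forall t', P t' -> f t <= f t'.
Proof.
move=> cA A0 cf AP.
have [c /[!inE] Ac cmin] := compact_EVT_min A0 cA (continuous_subspaceT cf).
have cmin' t : P t -> f c <= f t by move=> /AP At; apply: cmin; rewrite inE.
exists (A `&` [set t | f t <= f c])%classic.
  split; last by exists c; split=> /=.
  apply: compact_closedI => //.
  exact: (proj1 (continuous_closedP f) cf _ (@closed_le _ (f c))).
move=> t; split=> [[/AP Pt ftc]|[/[dup] /AP At Pt tmin]].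
  by split=> // t' /cmin'; apply: le_trans.
by split=> //; apply: tmin; apply/AP.
Qed.

Section LexicographicSelection.
Variables (R : realType) (L B : R * R -> R).

Definition lex_feasible (beta : R) (t : R * R) : Prop :=
  [/\ 0 <= t.1 <= 1, 0 <= t.2 <= 1 & `|B t| <= beta].
Definition lex_loss_min beta (t : R * R) : Prop :=
  lex_feasible beta t /\ forall t', lex_feasible beta t' -> L t <= L t'.
Definition lex_bias_min beta (t : R * R) : Prop :=
  lex_loss_min beta t /\ forall t', lex_loss_min beta t' -> `|B t| <= `|B t'|.
Definition lex_tau1_min beta (t : R * R) : Prop :=
  lex_bias_min beta t /\ forall t', lex_bias_min beta t' -> t.1 <= t'.1.
Definition lex_returned beta (t : R * R) : Prop :=
  lex_tau1_min beta t /\ forall t', lex_tau1_min beta t' -> t.2 <= t'.2.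

Lemma lex_returned_exists beta :
  continuous L -> continuous B -> (exists t, lex_feasible beta t) ->
  exists t, lex_returned beta t.
Proof.
move=> cL cB [t0 feas_t0].
pose A := (`[0, 1] `*` `[0, 1] `&` [set t | `|B t| <= beta])%classic.
have cnB : continuous (fun t => `|B t|).
  by move=> t; apply: continuous_comp (cB t) _; exact: norm_continuous.
have cA : compact A.
  apply: compact_closedI; first by apply: compact_setX; exact: segment_compact.
  exact: (proj1 (continuous_closedP _) cnB _ (@closed_le _ beta)).
have AP t : A t <-> lex_feasible beta t.
  by rewrite /A /lex_feasible /= !in_itv; split=> [[[]]|[]].
have A0 : (A !=set0)%classic by exists t0; apply/AP.
have [A1 [cA1 A10] A1P] := compact_argmin cA A0 cL AP.
have [A2 [cA2 A20] A2P] := compact_argmin cA1 A10 cnB A1P.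
have [A3 [cA3 A30] A3P] := compact_argmin cA2 A20 (fun=> cvg_fst) A2P.
have [A4 [_ [t A4t]] A4P] := compact_argmin cA3 A30 (fun=> cvg_snd) A3P.
by exists t; apply/A4P.
Qed.

Lemma lex_feasible_le beta beta' t :
  beta <= beta' -> lex_feasible beta t -> lex_feasible beta' t.
Proof. by move=> bb' [t1 t2 Bt]; split=> //; apply: le_trans bb'. Qed.

Lemma lex_loss_min_le beta t u :
  lex_loss_min beta t -> lex_feasible beta u -> L u <= L t -> lex_loss_min beta u.
Proof. by move=> [_ tmin] feas_u Lut; split=> // t' /tmin; apply: le_trans. Qed.

Lemma lex_bias_min_le beta t u :
  lex_bias_min beta t -> lex_loss_min beta u -> `|B u| <= `|B t| -> lex_bias_min beta u.
Proof. by move=> [_ tmin] umin But; split=> // t' /tmin; apply: le_trans. Qed.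

Lemma lex_bias_min_exchange beta beta' t t' u u' :
  lex_bias_min beta t -> lex_bias_min beta' t' ->
  B u = B t' -> B u' = B t -> L u + L u' <= L t + L t' ->
  0 <= u.1 <= 1 -> 0 <= u.2 <= 1 -> 0 <= u'.1 <= 1 -> 0 <= u'.2 <= 1 ->
  lex_bias_min beta' u /\ lex_bias_min beta u'.
Proof.
move=> tb tb' Bu Bu' Lsum u1 u2 u'1 u'2.
case: (tb) (tb') => [[[_ _ Bt] tmin] _] [[[_ _ Bt'] t'min] _].
have feas_u : lex_feasible beta' u by split; rewrite ?Bu.
have feas_u' : lex_feasible beta u' by split; rewrite ?Bu'.
have Lt'u := t'min _ feas_u; have Ltu' := tmin _ feas_u'.
split.
- apply: (lex_bias_min_le tb'); last by rewrite Bu.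
  by apply: lex_loss_min_le (proj1 tb') feas_u _; lra.
- apply: (lex_bias_min_le tb); last by rewrite Bu'.
  by apply: lex_loss_min_le (proj1 tb) feas_u' _; lra.
Qed.

End LexicographicSelection.

Section ConvexFrontier.
Variables (R : realType) (l g : R -> R).

Definition convex_frontier : Prop :=
  forall p q lam, 0 <= p <= 1 -> 0 <= q <= 1 -> 0 <= lam <= 1 ->
  exists r, [/\ 0 <= r <= 1, g r = (1 - lam) * g p + lam * g q &
                l r <= (1 - lam) * l p + lam * l q].

Lemma convex_frontier_of_slopes :
  continuous g -> {homo g : x y /~ x <= y} ->
  (forall a b c, 0 <= a -> a <= b -> b <= c -> c <= 1 ->
     (l b - l c) * (g a - g b) <= (l a - l b) * (g b - g c)) ->
  convex_frontier.
Proof.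
move=> g_cont g_anti slopes.
suff ordered p q lam : 0 <= p -> p <= q -> q <= 1 -> 0 <= lam <= 1 ->
    exists r, [/\ 0 <= r <= 1, g r = (1 - lam) * g p + lam * g q &
                  l r <= (1 - lam) * l p + lam * l q].
  move=> p q lam /andP[p0 p1] /andP[q0 q1] /andP[lam0 lam1].
  have [pq|qp] := leP p q; first by apply: ordered => //; apply/andP.
  have [|r [r01 gr lr]] := ordered q p (1 - lam) q0 (ltW qp) p1.
    by apply/andP; split; lra.
  by exists r; split=> //; [rewrite gr; ring | lra].
move=> p0 pq q1 /andP[lam0 lam1].
have gqp : g q <= g p by exact: g_anti.
set w := (1 - lam) * g p + lam * g q.
have [gpq|gpq] := eqVneq (g p) (g q).
  have [lpq|lqp] := leP (l p) (l q).
    exists p; split; [apply/andP; split; lra | rewrite /w -gpq; ring | nra].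
  exists q; split; [apply/andP; split; lra | rewrite /w gpq; ring | nra].
have w_between : Num.min (g p) (g q) <= w <= Num.max (g p) (g q).
  have h1 : 0 <= lam * (g p - g q) by apply: mulr_ge0; lra.
  have h2 : 0 <= (1 - lam) * (g p - g q) by apply: mulr_ge0; lra.
  by rewrite (min_r gqp) (max_l gqp); apply/andP; split; rewrite /w; lra.
have [c /[!in_itv] /= /andP[pc cq] gc] := IVT pq (continuous_subspaceT g_cont) w_between.
exists c; split=> //; first by apply/andP; split; lra.
have gpq_gt0 : 0 < g p - g q by rewrite subr_gt0 lt_neqAle eq_sym gpq gqp.
have := slopes p c q p0 pc cq q1; rewrite gc /w => slope_pcq.
have : (g p - g q) * (l c - ((1 - lam) * l p + lam * l q)) <= 0 by nra.
by rewrite pmulr_rle0 // subr_le0.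
Qed.

Lemma convex_frontier_exchange : convex_frontier ->
  forall p p' w w', 0 <= p <= 1 -> 0 <= p' <= 1 -> w + w' = g p + g p' ->
  (g p <= w <= g p') \/ (g p' <= w <= g p) ->
  exists r r', [/\ 0 <= r <= 1, 0 <= r' <= 1, g r = w, g r' = w' &
                   l r + l r' <= l p + l p'].
Proof.
move=> frontier p p' w w' p01 p'01 ww' w_between.
have [gpp'|gpp'] := eqVneq (g p) (g p').
  have -> : w = g p by case: w_between => [/andP[? ?]|/andP[? ?]]; lra.
  by exists p, p'; split=> //; lra.
have d_neq0 : g p' - g p != 0 by rewrite subr_eq0 eq_sym.
pose lam := (w - g p) / (g p' - g p).
have lamE : lam * (g p' - g p) = w - g p by rewrite mulfVK.
have lam01 : 0 <= lam <= 1.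
  have [d_lt0|d_gt0|d_eq0] := ltgtP (g p' - g p) 0; last by rewrite d_eq0 eqxx in d_neq0.
  - by case: w_between => [/andP[? ?]|/andP[? ?]]; apply/andP; split; nra.
  - by case: w_between => [/andP[? ?]|/andP[? ?]]; apply/andP; split; nra.
have [r [r01 gr lr]] := frontier p p' lam p01 p'01 lam01.
have [r' [r'01 gr' lr']] := frontier p' p lam p'01 p01 lam01.
by exists r, r'; split=> //; [rewrite gr | rewrite gr' | ]; lra.
Qed.

End ConvexFrontier.

Section SeparableSelection.
Variables (R : realType) (l1 l2 g1 g2 : R -> R).
Hypotheses (g1_anti : {homo g1 : x y /~ x <= y}) (g2_anti : {homo g2 : x y /~ x <= y}).
Hypotheses (frontier1 : convex_frontier l1 g1) (frontier2 : convex_frontier l2 g2).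

Let L (t : R * R) := l1 t.1 + l2 t.2.
Let B (t : R * R) := g1 t.1 - g2 t.2.
Local Notation returned := (lex_returned L B).

Lemma returned_exists beta :
  continuous l1 -> continuous l2 -> continuous g1 -> continuous g2 ->
  (exists t, lex_feasible B beta t) -> exists t, returned beta t.
Proof.
move=> l1_cont l2_cont g1_cont g2_cont; apply: lex_returned_exists => t.
  by apply: continuousD; apply: continuous_comp; [exact: cvg_fst | exact: l1_cont |
    exact: cvg_snd | exact: l2_cont].
by apply: continuousB; apply: continuous_comp; [exact: cvg_fst | exact: g1_cont |
  exact: cvg_snd | exact: g2_cont].
Qed.

Lemma returned_abs_bias_le b b' t t' :
  b <= b' -> returned b t -> returned b' t' -> `|B t| <= `|B t'|.
Proof.
move=> bb' [[[tmin tbias] _] _] [[[[feas_t' t'min] _] _] _].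
have [[_ _ Bt] _] := tmin.
have [Bt'b|Bt'b] := leP `|B t'| b; last by rewrite ltW // (le_lt_trans Bt).
apply: tbias; apply: (lex_loss_min_le tmin); first by case: feas_t'.
by apply: t'min; apply: lex_feasible_le bb' _; case: tmin.
Qed.

(* Otherwise mixing t and t' would give a point of zero bias and no larger loss than t. *)
Lemma returned_bias_same_sign b b' t t' :
  b <= b' -> returned b t -> returned b' t' -> 0 <= B t * B t'.
Proof.
move=> bb' [[[tmin tbias] _] _] [[[t'min _] _] _].
have [[t1 t2 Bt] _] := tmin; have [[t'1 t'2 _] _] := t'min.
rewrite leNgt; apply/negP => sign_change.
have signs : (B t < 0 < B t') \/ (B t' < 0 < B t).
  have [Bt_lt0|Bt_gt0|Bt0] := ltgtP (B t) 0; last by rewrite Bt0 mul0r ltxx in sign_change.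
    by left; rewrite /= -(nmulr_rlt0 _ Bt_lt0).
  by right; rewrite andbT -(pmulr_rlt0 _ Bt_gt0).
have d_neq0 : B t - B t' != 0.
  by rewrite subr_eq0 neq_lt; case: signs => [/andP[? ?]|/andP[? ?]]; apply/orP; [left|right]; lra.
pose lam := B t / (B t - B t').
have lamE : lam * (B t - B t') = B t by rewrite mulfVK.
have lam01 : 0 <= lam <= 1.
  move: lamE; case: signs => [/andP[? ?]|/andP[? ?]] lamE; apply/andP; split; nra.
have [r1 [r1_01 g1r1 l1r1]] := frontier1 t1 t'1 lam01.
have [r2 [r2_01 g2r2 l2r2]] := frontier2 t2 t'2 lam01.
have Br : B (r1, r2) = 0.
  by rewrite -(subrr (B t)) -{2}lamE /B /= g1r1 g2r2; ring.
have Lt't : L t' <= L t by apply: (proj2 t'min); apply: lex_feasible_le bb' _; case: tmin.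
have feas_r : lex_feasible B b (r1, r2) by split; rewrite // Br normr0 (le_trans _ Bt).
have r_min : lex_loss_min L B b (r1, r2).
  apply: (lex_loss_min_le tmin feas_r).
  have := ler_wpM2l (proj1 (andP lam01)) Lt't; rewrite /L /= in Lt't *; lra.
have := tbias _ r_min; rewrite Br normr0 normr_le0 => /eqP Bt0.
by move: sign_change; rewrite Bt0 mul0r ltxx.
Qed.

(* If t.1 < t'.1, exchanging group-2 thresholds between t and t' yields a point with the
   bias of t', no larger loss, and first coordinate t.1: it beats t' on the tie-break. *)
Lemma returned_tau1_le b b' t t' :
  returned b t -> returned b' t' -> B t <= B t' -> t'.1 <= t.1.
Proof.
move=> [[tb _] _] [[tb' t'tau1] _] Btt'.
have [[[t1 t2 _] _] _] := tb; have [[[t'1 t'2 _] _] _] := tb'.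
rewrite leNgt; apply/negP => tt'1.
have g1tt' : g1 t'.1 <= g1 t.1 by apply/g1_anti/ltW.
have w_sum : (g1 t.1 - B t') + (g1 t'.1 - B t) = g2 t.2 + g2 t'.2 by rewrite /B; ring.
have w_between : (g2 t.2 <= g1 t.1 - B t' <= g2 t'.2) \/ (g2 t'.2 <= g1 t.1 - B t' <= g2 t.2).
  by right; apply/andP; split; rewrite /B in Btt' *; lra.
have [r [r' [r01 r'01 g2r g2r' l2rr']]] :=
  convex_frontier_exchange frontier2 t2 t'2 w_sum w_between.
have Bu : B (t.1, r) = B t' by rewrite {1}/B /= g2r; ring.
have Bu' : B (t'.1, r') = B t by rewrite {1}/B /= g2r'; ring.
have L_sum : L (t.1, r) + L (t'.1, r') <= L t + L t' by rewrite /L /=; lra.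
have [u_min _] := lex_bias_min_exchange tb tb' Bu Bu' L_sum t1 r01 t'1 r'01.
by have := t'tau1 _ u_min; rewrite leNgt tt'1.
Qed.

(* Symmetrically, with exchanges in group 1 (or a plain swap of the second coordinates
   when g2 does not separate them), t would lose its tie-breaks. *)
Lemma returned_tau2_le b b' t t' :
  returned b t -> returned b' t' -> B t <= B t' -> t.2 <= t'.2.
Proof.
move=> [[tb ttau1] ttau2] [[tb' _] _] Btt'.
have [[[t1 t2 _] _] _] := tb; have [[[t'1 t'2 _] _] _] := tb'.
rewrite leNgt; apply/negP => t't2.
have g2tt' : g2 t.2 <= g2 t'.2 by apply/g2_anti/ltW.
have [g2eq|g2neq] := eqVneq (g2 t'.2) (g2 t.2).
  have Bu : B (t'.1, t.2) = B t' by rewrite /B /= g2eq.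
  have Bu' : B (t.1, t'.2) = B t by rewrite /B /= g2eq.
  have L_sum : L (t'.1, t.2) + L (t.1, t'.2) <= L t + L t' by rewrite /L /=; lra.
  have [_ u'_min] := lex_bias_min_exchange tb tb' Bu Bu' L_sum t'1 t2 t1 t'2.
  have u'_tau1 : lex_tau1_min L B b (t.1, t'.2) by split=> // v /ttau1.
  by have := ttau2 _ u'_tau1; rewrite leNgt t't2.
have w_sum : (B t + g2 t'.2) + (B t' + g2 t.2) = g1 t.1 + g1 t'.1 by rewrite /B; ring.
have w_between : (g1 t.1 <= B t + g2 t'.2 <= g1 t'.1) \/ (g1 t'.1 <= B t + g2 t'.2 <= g1 t.1).
  by left; apply/andP; split; rewrite /B in Btt' *; lra.
have [r [r' [r01 r'01 g1r g1r' l1rr']]] :=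
  convex_frontier_exchange frontier1 t1 t'1 w_sum w_between.
have Bu : B (r', t.2) = B t' by rewrite {1}/B /= g1r'; ring.
have Bu' : B (r, t'.2) = B t by rewrite {1}/B /= g1r; ring.
have L_sum : L (r', t.2) + L (r, t'.2) <= L t + L t' by rewrite /L /=; lra.
have [_ u'_min] := lex_bias_min_exchange tb tb' Bu Bu' L_sum r'01 t2 r01 t'2.
have := g1_anti (ttau1 _ u'_min); rewrite /= g1r /B => g1_le.
suff g2eq : g2 t'.2 = g2 t.2 by rewrite g2eq eqxx in g2neq.
by apply/le_anti/andP; split; lra.
Qed.

Lemma returned_monotone b1 b2 b3 t1 t2 t3 :
  b1 <= b2 -> b2 <= b3 -> returned b1 t1 -> returned b2 t2 -> returned b3 t3 ->
  (t3.1 <= t2.1 <= t1.1 /\ t1.2 <= t2.2 <= t3.2) \/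
  (t1.1 <= t2.1 <= t3.1 /\ t3.2 <= t2.2 <= t1.2).
Proof.
move=> b12 b23 ret1 ret2 ret3.
have [/andP[B12 B23]|/andP[B32 B21]] := monotone_of_norm_chain
  (returned_abs_bias_le b12 ret1 ret2) (returned_abs_bias_le b23 ret2 ret3)
  (returned_bias_same_sign b12 ret1 ret2) (returned_bias_same_sign b23 ret2 ret3).
- left; rewrite (returned_tau1_le ret1 ret2 B12) (returned_tau1_le ret2 ret3 B23).
  by rewrite (returned_tau2_le ret1 ret2 B12) (returned_tau2_le ret2 ret3 B23).
- right; rewrite (returned_tau1_le ret3 ret2 B32) (returned_tau1_le ret2 ret1 B21).
  by rewrite (returned_tau2_le ret3 ret2 B32) (returned_tau2_le ret2 ret1 B21).
Qed.

End SeparableSelection.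

Lemma natr_count (R : pzSemiRingType) (T : Type) (P : pred T) (s : seq T) :
  (count P s)%:R = \sum_(i <- s) (P i)%:R :> R.
Proof. by rewrite -sum1_count natr_sum big_mkcond; apply: eq_bigr => i _; case: (P i). Qed.

Lemma leq_count_add (T : Type) (P1 P2 P : pred T) (s : seq T) :
  (forall x, P1 x + P2 x <= P x)%N -> (count P1 s + count P2 s <= count P s)%N.
Proof. by move=> P12; elim: s => //= x s IHs; rewrite addnACA leq_add. Qed.

Lemma slope_ineq_of_sums (R : realFieldType) (I : eqType) (s : seq I)
    (f : I -> R -> R) (alpha omega : I -> R) (l g : R -> R) (C C' c c' a b d : R) :
  0 <= c -> 0 <= c' ->
  (forall t, l t = C + c * \sum_(i <- s) alpha i * f i t) ->
  (forall t, g t = C' + c' * \sum_(i <- s) omega i * f i t) ->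
  {in s &, forall i j,
     (f i b - f i d) * (f j a - f j b) * (alpha i * omega j - alpha j * omega i) <= 0} ->
  (l b - l d) * (g a - g b) <= (l a - l b) * (g b - g d).
Proof.
move=> c0 c'0 lE gE pairwise.
have diffE (h : R -> R) K k (w : I -> R) : (forall t, h t = K + k * \sum_(i <- s) w i * f i t) ->
    forall u v, h u - h v = k * \sum_(i <- s) w i * (f i u - f i v).
  move=> hE u v; rewrite !hE opprD addrACA subrr add0r -mulrBr -sumrB.
  by congr (_ * _); apply: eq_bigr => i _; rewrite mulrBr.
rewrite !(diffE _ _ _ _ lE) !(diffE _ _ _ _ gE) -subr_le0.
have -> : forall x y z w : R, c * x * (c' * y) - c * z * (c' * w) = c * c' * (x * y - z * w).
  by move=> x y z w; ring.
apply: mulr_ge0_le0; first exact: mulr_ge0.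
set x := \sum_(i <- s) alpha i * _; set y := \sum_(i <- s) omega i * _.
set z := \sum_(i <- s) alpha i * _; set w := \sum_(i <- s) omega i * _.
have -> : x * y - z * w = \sum_(i <- s) \sum_(j <- s)
    (f i b - f i d) * (f j a - f j b) * (alpha i * omega j - alpha j * omega i).
  rewrite /x /y /z /w big_distrl [in X in _ - X]mulrC big_distrl -sumrB /=.
  apply: eq_bigr => i _; rewrite !big_distrr -sumrB /=.
  by apply: eq_bigr => j _; ring.
rewrite big_seq; apply: sumr_le0 => i si.
by rewrite big_seq; apply: sumr_le0 => j sj; exact: pairwise.
Qed.

Section Thresholds.
Variables (R : realType) (X : eqType) (D : seq (X * nat * bool)) (S : X -> nat -> R).

Local Notation above a x := (grp_mass S D a (fun s => S x a < s)).
Local Notation at_score a x := (grp_mass S D a (fun s => s == S x a)).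

Lemma thrE a t x : thr S D a t x = clamp01 ((1 - t - above a x) / at_score a x).
Proof. by []. Qed.

Lemma grp_mass_ge0 a P : 0 <= grp_mass S D a P.
Proof. by rewrite divr_ge0 ?ler0n. Qed.

Lemma thr_ge0 a t x : 0 <= thr S D a t x.
Proof. exact: clamp01_ge0. Qed.

Lemma thr_le1 a t x : thr S D a t x <= 1.
Proof. exact: clamp01_le1. Qed.

Lemma thr_antitone a x : {homo (fun t => thr S D a t x) : t t' /~ t <= t'}.
Proof.
move=> t t' tt'; rewrite !thrE; apply/clamp01_le/ler_wpM2r; last by lra.
by rewrite invr_ge0 grp_mass_ge0.
Qed.

Lemma thr_continuous a x : continuous (fun t => thr S D a t x).
Proof.
have -> : (fun t => thr S D a t x) =
    @clamp01 R \o (fun t => (1 - t - above a x) / at_score a x) by [].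
move=> t; apply: continuous_comp; last exact: clamp01_continuous.
apply: continuousM; last exact: cvg_cst.
by apply: continuousB; [apply: continuousB; [exact: cvg_cst | exact: cvg_id] | exact: cvg_cst].
Qed.

Lemma at_score_gt0 a e : e \in D -> ai e = a -> 0 < at_score a (xi e).
Proof.
by move=> eD <-; rewrite divr_gt0 // ltr0n -has_count; apply/hasP; exists e; rewrite ?eqxx.
Qed.

Lemma above_at_score_le a x x' :
  S x a < S x' a -> above a x' + at_score a x' <= above a x.
Proof.
move=> xx'; rewrite -mulrDl ler_wpM2r ?invr_ge0 ?ler0n // -natrD ler_nat.
apply: leq_count_add => e; case: (ai e == a) => //=.
case: (ltgtP (S x' a) (S (xi e) (ai e))) => //= [x'e|<-]; last by rewrite xx'.
by rewrite (lt_trans xx' x'e).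
Qed.

Lemma above_at_score_le1 a x e :
  e \in D -> ai e = a -> above a x + at_score a x <= 1.
Proof.
move=> eD ea; have group_gt0 : (0 < count (fun e => ai e == a) D)%N.
  by rewrite -has_count; apply/hasP; exists e; rewrite ?ea.
rewrite -mulrDl ler_pdivrMr ?ltr0n // mul1r -natrD ler_nat.
by apply: leq_count_add => e'; case: (ai e' == a); case: (ltgtP (S x a) (S (xi e') (ai e'))).
Qed.

Lemma thr_score_lt a t x e :
  e \in D -> ai e = a -> S x a < S (xi e) a ->
  thr S D a t x = 0 \/ thr S D a t (xi e) = 1.
Proof.
move=> eD ea xe; rewrite !thrE.
have E'_gt0 := at_score_gt0 eD ea.
have mass_le := above_at_score_le xe.
have E_ge0 : 0 <= at_score a x := grp_mass_ge0 _ _.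
have [v_le0|v_gt0] := leP ((1 - t - above a x) / at_score a x) 0.
  by left; exact: clamp01_le0.
right; apply: clamp01_ge1; rewrite ler_pdivlMr // mul1r.
suff : 0 < 1 - t - above a x by lra.
by move: v_gt0; apply: contraTT; rewrite -!leNgt => ?; rewrite mulr_le0_ge0 ?invr_ge0.
Qed.

Lemma thr_at0 a e : e \in D -> ai e = a -> thr S D a 0 (xi e) = 1.
Proof.
move=> eD ea; rewrite thrE; apply: clamp01_ge1.
have E_gt0 := at_score_gt0 eD ea; have mass_le1 := above_at_score_le1 (xi e) eD ea.
by rewrite ler_pdivlMr // mul1r; lra.
Qed.

Variable k : bias_kind.

Definition group_loss a t : R :=
  (\sum_(e <- D | ai e == a) (if yi e then 1 - thr S D a t (xi e) else thr S D a t (xi e)))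
  / (size D)%:R.

Definition group_rate a t : R :=
  (\sum_(e <- D | in_pop k a e) thr S D a t (xi e)) / (count (in_pop k a) D)%:R.

Lemma group_rate_antitone a : {homo group_rate a : t t' /~ t <= t'}.
Proof.
move=> t t' tt'; apply: ler_wpM2r; first by rewrite invr_ge0 ler0n.
by apply: ler_sum => e _; exact: thr_antitone.
Qed.

Lemma group_rate_continuous a : continuous (group_rate a).
Proof.
move=> t; apply: (@continuousM _ _ (fun t => \sum_(e <- D | in_pop k a e) _) (fun=> _));
  last exact: cvg_cst.
apply: continuous_big; first exact: add_continuous.
by move=> e _; exact: thr_continuous.
Qed.

Lemma group_loss_continuous a : continuous (group_loss a).
Proof.
move=> t; apply: (@continuousM _ _ (fun t => \sum_(e <- D | ai e == a) _) (fun=> _));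
  last exact: cvg_cst.
apply: continuous_big; first exact: add_continuous.
move=> e _; case: (yi e) => /=; last exact: thr_continuous.
by move=> u; apply: cvgB; [exact: cvg_cst | exact: thr_continuous].
Qed.

Lemma in_pop_group a (e : X * nat * bool) : in_pop k a e -> ai e = a.
Proof. by case: k => /= [/eqP|/andP[/eqP]]. Qed.

Lemma group_rate0 a : has (in_pop k a) D -> group_rate a 0 = 1.
Proof.
move=> pop_a; rewrite /group_rate big_seq_cond.
rewrite (eq_bigr (fun=> 1)) => [|e /andP[eD /in_pop_group ea]]; last exact: thr_at0.
rewrite -big_seq_cond.
have -> : \sum_(e <- D | in_pop k a e) (1 : R) = (count (in_pop k a) D)%:R.
  by rewrite natr_count big_mkcond; apply: eq_bigr => e _; case: in_pop.
by rewrite divff // pnatr_eq0 -lt0n -has_count.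
Qed.

Lemma loss_split : all (fun d => (ai d == 1%N) || (ai d == 2%N)) D ->
  forall t, loss S D t = group_loss 1 t.1 + group_loss 2 t.2.
Proof.
move=> groups12 t; rewrite /loss /group_loss -mulrDl; congr (_ / _).
rewrite (bigID (fun e => ai e == 1%N)) /=; congr (_ + _).
  by apply: eq_bigr => e /eqP e1; rewrite /clf e1.
rewrite big_seq_cond [RHS]big_seq_cond; apply: eq_big => [e|e /andP[eD e_not1]].
  by case eD: (e \in D) => //=; have /orP[/eqP ->|/eqP ->] := allP groups12 e eD.
have /orP[/eqP e1|/eqP ->] := allP groups12 e eD; first by rewrite e1 in e_not1.
by [].
Qed.

Lemma bias_split t : bias S D k t = group_rate 1 t.1 - group_rate 2 t.2.
Proof.
by rewrite /bias /pop_mean; congr (_ / _ - _ / _);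
  apply: eq_bigr => e /in_pop_group ea; rewrite /clf ea.
Qed.

Section Bayes.
Hypothesis gabos : GABOS S D.

Lemma sum_label_eq_sum_score (psi : X -> nat -> R) :
  \sum_(e <- D) (yi e)%:R * psi (xi e) (ai e) =
  \sum_(e <- D) S (xi e) (ai e) * psi (xi e) (ai e).
Proof.
pose same (e e' : X * nat * bool) : R := ((xi e' == xi e) && (ai e' == ai e))%:R.
pose cnt e := \sum_(e' <- D) same e e'.
have same_sym e e' : same e e' = same e' e by rewrite /same eq_sym [ai e == _]eq_sym.
have scoreE e : e \in D -> S (xi e) (ai e) = (\sum_(e' <- D) same e e' * (yi e')%:R) / cnt e.
  move=> eD; rewrite (gabos eD) !natr_count; congr (_ / _).
  by apply: eq_bigr => e' _; rewrite /same -natrM mulnb andbA.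
have cnt_neq0 e : e \in D -> cnt e != 0.
  move=> eD; rewrite /cnt -natr_count pnatr_eq0 -lt0n -has_count.
  by apply/hasP; exists e; rewrite ?eqxx.
transitivity (\sum_(e' <- D) \sum_(e <- D) same e' e * ((yi e')%:R * psi (xi e') (ai e') / cnt e')).
  rewrite big_seq [RHS]big_seq; apply: eq_bigr => e' e'D.
  by rewrite -mulr_suml mulrCA divff ?mulr1 ?cnt_neq0.
rewrite exchange_big /= big_seq [RHS]big_seq; apply: eq_bigr => e eD.
rewrite scoreE // mulr_suml mulr_suml; apply: eq_bigr => e' _.
rewrite same_sym /same; case: andP => [[/eqP xe /eqP ae]|_]; last by rewrite !mul0r.
have -> : cnt e' = cnt e by apply: eq_bigr => e'' _; rewrite /same xe ae.
by rewrite xe ae !mul1r mulrAC.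
Qed.

Lemma group_lossE a t : group_loss a t =
  (\sum_(e <- D) (ai e == a)%:R * (yi e)%:R) / (size D)%:R +
  (size D)%:R^-1 * \sum_(e <- D) ((ai e == a)%:R * (1 - 2 * S (xi e) (ai e))) *
     thr S D a t (xi e).
Proof.
have labels := sum_label_eq_sum_score (fun x a' => (a' == a)%:R * thr S D a t x).
rewrite /group_loss big_mkcond.
have -> : \sum_(e <- D) (if ai e == a then
      (if yi e then 1 - thr S D a t (xi e) else thr S D a t (xi e)) else 0) =
    \sum_(e <- D) (ai e == a)%:R * (yi e)%:R +
    \sum_(e <- D) ((ai e == a)%:R * (1 - 2 * S (xi e) (ai e))) * thr S D a t (xi e) +
    2 * (\sum_(e <- D) S (xi e) (ai e) * ((ai e == a)%:R * thr S D a t (xi e)) -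
         \sum_(e <- D) (yi e)%:R * ((ai e == a)%:R * thr S D a t (xi e))).
  rewrite -sumrB mulr_sumr -!big_split /=; apply: eq_bigr => e _.
  by case: (ai e == a); case: (yi e); rewrite /=; ring.
by rewrite labels subrr mulr0 addr0 mulrDl [X in _ + X]mulrC.
Qed.

Lemma group_rateE a t : group_rate a t =
  (count (in_pop k a) D)%:R^-1 * \sum_(e <- D)
    ((ai e == a)%:R * (if k is DemParity then 1 else S (xi e) (ai e))) * thr S D a t (xi e).
Proof.
rewrite /group_rate mulrC big_mkcond; congr (_ * _).
have labels := sum_label_eq_sum_score (fun x a' => (a' == a)%:R * thr S D a t x).
case: k labels => /= labels.
  by apply: eq_bigr => e _; case: (ai e == a); rewrite /=; ring.
transitivity (\sum_(e <- D) (yi e)%:R * ((ai e == a)%:R * thr S D a t (xi e))).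
  by apply: eq_bigr => e _; case: (ai e == a); case: (yi e); rewrite /=; ring.
by rewrite labels; apply: eq_bigr => e _; ring.
Qed.

Lemma group_slope_ineq a u v w : u <= v -> v <= w ->
  (group_loss a v - group_loss a w) * (group_rate a u - group_rate a v) <=
  (group_loss a u - group_loss a v) * (group_rate a v - group_rate a w).
Proof.
move=> uv vw.
apply: (slope_ineq_of_sums (f := fun e t => thr S D a t (xi e))
  (alpha := fun e => (ai e == a)%:R * (1 - 2 * S (xi e) (ai e)))
  (omega := fun e => (ai e == a)%:R * (if k is DemParity then 1 else S (xi e) (ai e)))
  (C' := 0) (c' := (count (in_pop k a) D)%:R^-1) _ _ (group_lossE a)).
- by rewrite invr_ge0 ler0n.
- by rewrite invr_ge0 ler0n.
- by move=> t; rewrite add0r group_rateE.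
move=> e e' _ e'D /=.
have dv_ge0 : 0 <= thr S D a v (xi e) - thr S D a w (xi e) by rewrite subr_ge0 thr_antitone.
have du_ge0 : 0 <= thr S D a u (xi e') - thr S D a v (xi e') by rewrite subr_ge0 thr_antitone.
case: (ai e =P a) => [ea|_]; last by rewrite /= !mul0r !mulr0 subrr mulr0.
case: (ai e' =P a) => [ea'|_]; last by rewrite /= !mul0r !mulr0 subrr mulr0.
rewrite ea ea' !mul1r.
have [ee'|ee'] := leP (S (xi e') a) (S (xi e) a).
  by apply: mulr_ge0_le0; [exact: mulr_ge0 | case: k => /=; nra].
have [off|on] := thr_score_lt v e'D ea' ee'.
  suff -> : thr S D a v (xi e) - thr S D a w (xi e) = 0 by rewrite !mul0r.
  by move: dv_ge0; rewrite off; have := thr_ge0 a w (xi e); lra.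
suff -> : thr S D a u (xi e') - thr S D a v (xi e') = 0 by rewrite mulr0 mul0r.
by move: du_ge0; rewrite on; have := thr_le1 a u (xi e'); lra.
Qed.

Lemma group_convex_frontier a : convex_frontier (group_loss a) (group_rate a).
Proof.
apply: convex_frontier_of_slopes.
- exact: group_rate_continuous.
- exact: group_rate_antitone.
- by move=> u v w _ uv vw _; exact: group_slope_ineq.
Qed.

End Bayes.

End Thresholds.

Theorem theorem3 (R : realType) (X : eqType) (D : seq (X * nat * bool))
    (S : X -> nat -> R) (k : bias_kind)
    (Hgroups : all (fun d => (ai d == 1%N) || (ai d == 2%N)) D)
    (Hpop1 : has (in_pop k 1) D) (Hpop2 : has (in_pop k 2) D)
    (Hgabos : GABOS S D) :
  (forall beta : R, 0 < beta -> exists t, returned S D k beta t) /\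
  (forall (b1 b2 b3 : R) (t1 t2 t3 : R * R),
     0 < b1 -> b1 < b2 -> b2 < b3 ->
     returned S D k b1 t1 -> returned S D k b2 t2 -> returned S D k b3 t3 ->
     forall d, d \in D ->
       (clf S D t1 (xi d) (ai d) <= clf S D t2 (xi d) (ai d) <= clf S D t3 (xi d) (ai d))
       \/
       (clf S D t3 (xi d) (ai d) <= clf S D t2 (xi d) (ai d) <= clf S D t1 (xi d) (ai d))).
Proof.
set L := fun t : R * R => group_loss D S 1 t.1 + group_loss D S 2 t.2.
set B := fun t : R * R => group_rate D S k 1 t.1 - group_rate D S k 2 t.2.
have returnedE beta t : returned S D k beta t <-> lex_returned L B beta t.
  have -> : L = loss S D by apply/funext => u; rewrite (loss_split _ Hgroups).
  by have -> : B = bias S D k by apply/funext => u; rewrite bias_split.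
have g_anti a := group_rate_antitone D S k a.
have frontier a := group_convex_frontier k Hgabos a.
split=> [beta beta_gt0|b1 b2 b3 t1 t2 t3 _ b12 b23 /returnedE ret1 /returnedE ret2
          /returnedE ret3 d _].
  have [|t ret] := returned_exists (beta := beta) (@group_loss_continuous _ _ D S 1)
    (@group_loss_continuous _ _ D S 2) (@group_rate_continuous _ _ D S k 1)
    (@group_rate_continuous _ _ D S k 2).
    exists (0, 0); split; rewrite /= ?lexx ?ler01 // !group_rate0 // subrr normr0.
    exact: ltW.
  by exists t; apply/returnedE.
have := returned_monotone (g_anti 1%N) (g_anti 2%N) (frontier 1%N) (frontier 2%N)
  (ltW b12) (ltW b23) ret1 ret2 ret3.
rewrite /clf; case: (ai d == 1%N)
  => -[[/andP[x32 x21] /andP[y12 y23]]|[/andP[x12 x23] /andP[y32 y21]]].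
- by left; rewrite !thr_antitone.
- by right; rewrite !thr_antitone.
- by right; rewrite !thr_antitone.
- by left; rewrite !thr_antitone.
Qed.
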